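(* For any $\rho\in(0,\frac\pi2)$ and all $\tilde\theta\in\mathbb S(\rho)$, $$\sin(\rho)\lambda_2I\le\nabla^2U(\tilde\theta)\le\lambda_NI,$$ where $\lambda_2$ and $\lambda_N$ are the second-smallest and largest eigenvalues of $M^{-1}L_B$, respectively.
   Context: Let $(\mathcal N,\mathcal E)$ be a connected undirected graph, $\mathcal N=\{1,\dots,N\}$, $E=|\mathcal E|$, with edge weights $B^0_{ij}>0$. Fix an edge orientation, let $A\in\mathbb R^{N\times E}$ be the node-edge incidence matrix, $\Gamma=\mathrm{diag}(B^0_{ij},\{i,j\}\in\mathcal E)$ and $L_B=A\Gamma A^T$. Let $M=\mathrm{diag}(M_1,\dots,M_N)$ with $M_i>0$ and $Y\in\mathbb R^{N\times(N-1)}$ a matrix whose columns form an orthonormal basis of the null space of $\mathbb 1_N^TM^{1/2}$. Define $U(\tilde\theta):=-\mathbb 1_E^T\Gamma\cos(A^TM^{-1/2}Y\tilde\theta)$ for $\tilde\theta\in\mathbb R^{N-1}$ (cosine elementwise), whose Hessian is $\nabla^2U(\tilde\theta)=Y^TM^{-1/2}A\,\mathrm{diag}(\Gamma\cos(A^TM^{-1/2}Y\tilde\theta))A^TM^{-1/2}Y$. For $\rho\in(0,\frac\pi2)$, $\mathbb S(\rho):=\{\tilde\theta:\max_l|(A^TM^{-1/2}Y\tilde\theta)_l|<\frac\pi2-\rho\}$. For symmetric matrices, $A\le B$ means $B-A$ is positive semidefinite. *)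

From HB Require Import structures.
From mathcomp Require Import all_boot all_order all_algebra.
From mathcomp Require Import reals trigo.
Set Implicit Arguments. Unset Strict Implicit. Unset Printing Implicit Defensive.
Import Order.TTheory GRing.Theory Num.Theory.
Local Open Scope ring_scope.

Section Defs.
Variable R : realType.

Definition simple_graph N E (src tgt : 'I_E -> 'I_N) : Prop :=
  (forall e, src e != tgt e) /\
  (forall e f, [set src e; tgt e] = [set src f; tgt f] -> e = f).

Definition adj N E (src tgt : 'I_E -> 'I_N) : rel 'I_N :=
  fun i j => [exists e, ((src e == i) && (tgt e == j)) || ((src e == j) && (tgt e == i))].

Definition graph_connected N E (src tgt : 'I_E -> 'I_N) : Prop :=
  forall i j, connect (adj src tgt) i j.

Definition incidence N E (src tgt : 'I_E -> 'I_N) : 'M[R]_(N, E) :=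
  \matrix_(i, e) ((i == src e)%:R - (i == tgt e)%:R).

Definition Gam E (B : 'I_E -> R) : 'M[R]_E := diag_mx (\row_e B e).

Definition LapB N E (src tgt : 'I_E -> 'I_N) (B : 'I_E -> R) : 'M[R]_N :=
  incidence src tgt *m Gam B *m (incidence src tgt)^T.

Definition Mmx N (m : 'I_N -> R) : 'M[R]_N := diag_mx (\row_i m i).
Definition Msqrt N (m : 'I_N -> R) : 'M[R]_N := diag_mx (\row_i Num.sqrt (m i)).
Definition Minvsqrt N (m : 'I_N -> R) : 'M[R]_N := diag_mx (\row_i (Num.sqrt (m i))^-1).

(* columns of Y form an orthonormal basis of the null space of 1^T M^{1/2}
   (that null space has dimension N-1, so N-1 orthonormal vectors in it
   form a basis) *)
Definition Y_ok N (m : 'I_N -> R) (Y : 'M[R]_(N, N.-1)) : Prop :=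
  Y^T *m Y = 1%:M /\ const_mx 1 *m Msqrt m *m Y = (0 : 'M[R]_(1, N.-1)).

Definition phase N E (src tgt : 'I_E -> 'I_N) (m : 'I_N -> R)
  (Y : 'M[R]_(N, N.-1)) (th : 'cV[R]_(N.-1)) : 'cV[R]_E :=
  (incidence src tgt)^T *m Minvsqrt m *m Y *m th.

Definition Upot N E (src tgt : 'I_E -> 'I_N) (B : 'I_E -> R) (m : 'I_N -> R)
  (Y : 'M[R]_(N, N.-1)) (th : 'cV[R]_(N.-1)) : R :=
  - \sum_(e < E) B e * cos (phase src tgt m Y th e 0).

(* Hessian of U, as given in the paper:
   Y^T M^{-1/2} A diag(Gamma cos(A^T M^{-1/2} Y theta)) A^T M^{-1/2} Y *)
Definition hessU N E (src tgt : 'I_E -> 'I_N) (B : 'I_E -> R) (m : 'I_N -> R)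
  (Y : 'M[R]_(N, N.-1)) (th : 'cV[R]_(N.-1)) : 'M[R]_(N.-1) :=
  Y^T *m Minvsqrt m *m incidence src tgt
  *m diag_mx (\row_e (B e * cos (phase src tgt m Y th e 0)))
  *m (incidence src tgt)^T *m Minvsqrt m *m Y.

Definition Sset N E (src tgt : 'I_E -> 'I_N) (m : 'I_N -> R)
  (Y : 'M[R]_(N, N.-1)) (rho : R) (th : 'cV[R]_(N.-1)) : Prop :=
  forall l : 'I_E, `|phase src tgt m Y th l 0| < pi / 2 - rho.

Definition loewner_le n (P Q : 'M[R]_n) : Prop :=
  forall x : 'cV[R]_n, 0 <= (x^T *m (Q - P) *m x) 0 0.

Definition sorted_spectrum n (A : 'M[R]_n) (s : seq R) : Prop :=
  sorted <=%R s /\ char_poly A = \prod_(x <- s) ('X - x%:P).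

End Defs.

(* Write W := A^T M^{-1/2} Y, so that the Hessian is W^T diag(B_e cos phi_e) W, and let
   S := M^{-1/2} L_B M^{-1/2}, a symmetric positive semidefinite matrix similar to M^{-1} L_B,
   hence with spectrum lambda_1 <= ... <= lambda_N.  Then W^T Gamma W = Y^T S Y, and on S(rho)
   every cos phi_e lies in [sin rho, 1], so that sin rho * Y^T S Y <= Hessian <= Y^T S Y.
   The unit vector u along M^{1/2} 1 lies in the kernel of S and is orthogonal to the columns
   of Y, so in the orthonormal basis [u Y] the matrix S becomes diag(0, Y^T S Y): the
   characteristic polynomial of S is X times that of Y^T S Y.  As S >= 0 the removed root is
   lambda_1 = 0, so Y^T S Y has spectrum lambda_2, ..., lambda_N and the Rayleigh bounds
   lambda_2 I <= Y^T S Y <= lambda_N I conclude. *)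

From HB Require Import structures.
From mathcomp Require Import all_boot all_order all_algebra.
From mathcomp Require Import reals trigo.
From mathcomp Require Import complex ring lra.
Set Implicit Arguments.
Unset Strict Implicit.
Unset Printing Implicit Defensive.

Import Order.TTheory GRing.Theory Num.Theory.
Local Open Scope ring_scope.

Lemma char_poly_conj (R : comUnitRingType) n (A P : 'M[R]_n) :
  P \in unitmx -> char_poly (invmx P *m A *m P) = char_poly A.
Proof.
move=> Pu; rewrite /char_poly.
have -> : char_poly_mx (invmx P *m A *m P) =
    map_mx polyC (invmx P) *m char_poly_mx A *m map_mx polyC P.
  rewrite /char_poly_mx mulmxBr mulmxBl -!map_mxM; congr (_ - _).
  by rewrite mul_mx_scalar -scalemxAl -map_mxM mulVmx // map_mx1 scalemx1.
rewrite !det_mulmx !det_map_mx mulrC mulrA -rmorphM.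
by rewrite -det_mulmx mulmxV // det1 rmorph1 mul1r.
Qed.

Lemma char_poly_block0 (R : comNzRingType) n (K : 'M[R]_n) :
  char_poly (block_mx (0 : 'M_1) 0 0 K) = 'X * char_poly K.
Proof.
rewrite /char_poly /char_poly_mx (scalar_mx_block 1 n) map_block_mx.
rewrite opp_block_mx add_block_mx !map_mx0 !oppr0 !addr0 det_ublock.
by rewrite det_scalar1.
Qed.

Lemma mulmx1_invmx (R : comUnitRingType) n (A B : 'M[R]_n) :
  A *m B = 1%:M -> invmx A = B.
Proof.
move=> AB; have [A_unit _] := mulmx1_unit AB.
by rewrite -[invmx A]mulmx1 -AB mulmxA mulVmx ?mul1mx.
Qed.

Lemma char_poly_deflate (R : comUnitRingType) n (S : 'M[R]_(1 + n))
    (u : 'cV[R]_(1 + n)) (Y : 'M[R]_(1 + n, n)) :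
  S^T = S -> S *m u = 0 -> u^T *m u = 1%:M -> Y^T *m Y = 1%:M -> Y^T *m u = 0 ->
  char_poly S = 'X * char_poly (Y^T *m S *m Y).
Proof.
move=> S_sym Su0 uu YY Yu0.
have uS0 : u^T *m S = 0 by rewrite -S_sym -trmx_mul Su0 trmx0.
have uY0 : u^T *m Y = 0 by rewrite -[Y]trmxK -trmx_mul Yu0 trmx0.
pose Q : 'M[R]_(1 + n) := row_mx u Y.
have QQ : Q^T *m Q = 1%:M.
  by rewrite tr_row_mx mul_col_row uu uY0 Yu0 YY [RHS](scalar_mx_block 1 n).
have [Q_unit _] := mulmx1_unit (mulmx1C QQ).
rewrite -(char_poly_conj S Q_unit) (mulmx1_invmx (mulmx1C QQ)).
rewrite tr_row_mx mul_col_mx mul_col_row.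
by rewrite uS0 !mul0mx -(mulmxA _ S u) Su0 mulmx0 char_poly_block0.
Qed.

Section RealSymmetricSpectral.
Variable R : rcfType.
Local Notation f := (real_complex R).

Lemma sym_qform_spectral n (T : 'M[R]_n) (s : seq R) :
  T^T = T -> char_poly T = \prod_(r <- s) ('X - r%:P) ->
  forall x : 'cV[R]_n,
  exists2 d : 'I_n -> R, (forall i, d i \in s) &
  exists2 w : 'I_n -> R, (forall i, 0 <= w i) &
  forall a, (x^T *m (T - a *: 1%:M) *m x) 0 0 = \sum_i (d i - a) * w i.
Proof.
move=> Tsym Tchar x.
(* The spectral theorem is only available over an algebraically closed field, so T is
   diagonalised over R[i]; w i is |y_i|^2 for the coordinates y of x in the eigenbasis. *)
pose TC := map_mx f T.
have TC_herm : TC \is hermsymmx.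
  apply/is_hermitianmxP; rewrite expr0 scale1r; apply/matrixP => i j.
  by rewrite !mxE -[in LHS]Tsym mxE; exact/esym/conjc_real.
pose P := spectralmx TC; pose D := spectral_diag TC.
have TCE : TC = invmx P *m diag_mx D *m P.
  exact/orthomx_spectralP/hermitian_normalmx.
have P_unitary : P \is unitarymx := spectral_unitarymx TC.
have /fin_all_exists [d dE] : forall i, exists r, r \in s /\ D 0 i = f r.
  move=> i.
  have : root (char_poly TC) (D 0 i).
    rewrite TCE char_poly_conj ?spectral_unit // char_poly_trig ?diag_mx_is_trig //.
    rewrite -(big_map (fun j => diag_mx D j j) predT (fun a => 'X - a%:P)).
    rewrite root_prod_XsubC; apply/mapP; exists i; first by rewrite mem_index_enum.
    by rewrite mxE eqxx mulr1n.
  rewrite -map_char_poly Tchar rmorph_prod /=.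
  under eq_bigr do rewrite map_polyXsubC.
  rewrite -(big_map f predT (fun a => 'X - a%:P)) root_prod_XsubC.
  by case/mapP => r rs ->; exists r.
pose y := P *m map_mx f x.
exists d => [i|]; first by case: (dE i).
exists (fun i => complex.Re (y i 0) ^+ 2 + complex.Im (y i 0) ^+ 2) => [i|a].
  by rewrite addr_ge0 ?sqr_ge0.
have TaE : map_mx f (T - a *: 1%:M) = invmx P *m diag_mx (D - const_mx (f a)) *m P.
  rewrite map_mxB map_mxZ map_mx1 -/TC TCE linearB /= mulmxBr mulmxBl.
  by rewrite diag_const_mx mul_mx_scalar -scalemxAl mulVmx ?spectral_unit ?scalemx1.
have yt : (y ^t* )%sesqui = (map_mx f x)^T *m invmx P.
  rewrite invmx_unitary // /y trmx_mul map_mxM; congr (_ *m _).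
  by apply/matrixP => i j; rewrite !mxE; exact: conjc_real.
apply: complexI; rewrite rmorph_sum /=.
set q := x^T *m _ *m x; rewrite (_ : f (q 0 0) = map_mx f q 0 0) {}/q; last first.
  by rewrite [RHS]mxE.
rewrite !map_mxM TaE -map_trmx !mulmxA -yt -!mulmxA -/y mul_diag_mx mxE.
clearbody y.
apply: eq_bigr => i _; rewrite !mxE (proj2 (dE i)) rmorphM rmorphB /=.
by rewrite add_Re2_Im2 normCKC; ring.
Qed.

End RealSymmetricSpectral.

Section Loewner.
Variable R : realType.
Implicit Types (n : nat) (a : R).

Lemma loewner_le_trans n (P Q T : 'M[R]_n) :
  loewner_le P Q -> loewner_le Q T -> loewner_le P T.
Proof.
move=> PQ QT x; rewrite -(subrKA Q) addrC mulmxDr mulmxDl mxE.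
exact: addr_ge0.
Qed.

Lemma loewner_leZ n c (P Q : 'M[R]_n) :
  0 <= c -> loewner_le P Q -> loewner_le (c *: P) (c *: Q).
Proof.
move=> c_ge0 PQ x; rewrite -scalerBr -scalemxAr -scalemxAl mxE.
exact: mulr_ge0.
Qed.

Lemma loewner_le_congruence k l (W : 'M[R]_(k, l)) (P Q : 'M[R]_k) :
  loewner_le P Q -> loewner_le (W^T *m P *m W) (W^T *m Q *m W).
Proof.
move=> PQ x; rewrite -mulmxBl -mulmxBr !mulmxA -trmx_mul -!mulmxA mulmxA.
exact: PQ.
Qed.

Lemma loewner_le_diag n (c d : 'I_n -> R) :
  (forall i, c i <= d i) -> loewner_le (diag_mx (\row_i c i)) (diag_mx (\row_i d i)).
Proof.
move=> cd x; rewrite -linearB /= mul_mx_diag mxE sumr_ge0 // => i _.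
by rewrite !mxE mulrAC -expr2 mulr_ge0 ?subr_ge0 ?sqr_ge0.
Qed.

Lemma loewner_scalar_le n (T : 'M[R]_n) (s : seq R) a :
  T^T = T -> char_poly T = \prod_(r <- s) ('X - r%:P) ->
  {in s, forall r, a <= r} -> loewner_le (a *: 1%:M) T.
Proof.
move=> Tsym Tchar a_le x; have [d ds [w w_ge0 ->]] := sym_qform_spectral Tsym Tchar x.
by apply: sumr_ge0 => i _; rewrite mulr_ge0 ?subr_ge0 ?a_le.
Qed.

Lemma loewner_le_scalar n (T : 'M[R]_n) (s : seq R) a :
  T^T = T -> char_poly T = \prod_(r <- s) ('X - r%:P) ->
  {in s, forall r, r <= a} -> loewner_le T (a *: 1%:M).
Proof.
move=> Tsym Tchar le_a x; have [d ds [w w_ge0 qE]] := sym_qform_spectral Tsym Tchar x.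
rewrite -opprB mulmxN mulNmx mxE qE -sumrN sumr_ge0 // => i _.
by rewrite -mulNr opprB mulr_ge0 ?subr_ge0 ?le_a.
Qed.

Lemma char_poly_root_ge0 n (T : 'M[R]_n) r :
  loewner_le 0 T -> root (char_poly T) r -> 0 <= r.
Proof.
move=> T_psd; rewrite -eigenvalue_root_char => /eigenvalueP [w wT w_neq0].
have w2_gt0 : 0 < (w *m w^T) 0 0.
  have [j wj] : exists j, w 0 j != 0.
    apply/existsP; apply: contraR w_neq0 => /existsPn w0.
    by apply/eqP/rowP => j; rewrite mxE; apply/eqP/negPn.
  rewrite mxE (bigD1 j) //= ltr_pwDl ?sumr_ge0 // => [|i _]; rewrite mxE.
    by rewrite -expr2 lt_def sqr_ge0 sqrf_eq0 wj.
  by rewrite -expr2 sqr_ge0.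
have := T_psd w^T; rewrite subr0 trmxK wT -scalemxAl mxE.
by rewrite pmulr_lge0.
Qed.

End Loewner.

Section SortedSpectrum.
Context {d : Order.disp_t} {T : porderType d}.
Implicit Types (x : T) (s : seq T).

Lemma sorted_head_le x0 s : sorted <=%O s -> {in s, forall r, (head x0 s <= r)%O}.
Proof.
case: s => [//|x t] /= /(order_path_min le_trans) /allP t_ge r.
by rewrite inE => /predU1P [-> | /t_ge].
Qed.

Lemma sorted_le_last x0 s : sorted <=%O s -> {in s, forall r, (r <= last x0 s)%O}.
Proof.
case: s => [//|x t] /=; elim: t x => [|y t IHt] x /=.
  by move=> _ r /[!inE] /eqP ->.
move=> /andP [xy yt] r /[!inE] /predU1P [-> | ryt].
  by apply: le_trans xy (IHt y yt y _); rewrite inE eqxx.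
exact: IHt.
Qed.

Lemma sorted_min_mem x s :
  sorted <=%O s -> {in s, forall r, (x <= r)%O} -> x \in s -> s = x :: behead s.
Proof.
move=> s_sorted x_le x_in; case: s s_sorted x_le x_in => [//|y t] /= ss x_le x_in.
congr (_ :: _); apply/eqP; rewrite eq_le x_le ?mem_head //=.
by rewrite -[y]/(head x (y :: t)) sorted_head_le.
Qed.

End SortedSpectrum.

Lemma sin_le_cos (R : realType) (rho x : R) :
  0 <= rho -> `|x| < pi / 2 - rho -> sin rho <= cos x.
Proof.
move=> rho_ge0 x_lt; rewrite -cos_norm -cosBpihalf -cosN opprB.
have := pi_gt0 R; have := normr_ge0 x => x_ge0 pi_gt0.
by apply/ltW; rewrite ltr_cos // !in_itv /=; apply/andP; split; lra.
Qed.

Lemma incidence_trmx_const1 (R : realType) N E (src tgt : 'I_E -> 'I_N) :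
  (incidence R src tgt)^T *m (const_mx 1 : 'cV_N) = 0.
Proof.
have sum_delta j : \sum_i ((i == j)%:R : R) = 1.
  by rewrite (bigD1 j) //= eqxx big1 ?addr0 // => i /negPf ->.
apply/matrixP => e k; rewrite !mxE.
under eq_bigr do rewrite !mxE mulr1.
by rewrite sumrB !sum_delta subrr.
Qed.

Section NetworkHessian.
Variable R : realType.
Variables (n E : nat) (src tgt : 'I_E -> 'I_n.+1) (B : 'I_E -> R).
Variables (m : 'I_n.+1 -> R) (Y : 'M[R]_(n.+1, n)).
Hypotheses (B_gt0 : forall e, 0 < B e) (m_gt0 : forall i, 0 < m i).
Hypothesis Y_orthonormal : Y_ok m Y.

Local Notation A := (incidence R src tgt).
Local Notation Ms := (Msqrt m).
Local Notation Mis := (Minvsqrt m).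

Definition normLap : 'M[R]_n.+1 := Mis *m LapB src tgt B *m Mis.
Definition redLap : 'M[R]_n := Y^T *m normLap *m Y.
Definition phase_mx : 'M[R]_(E, n) := A^T *m Mis *m Y.

Lemma Minvsqrt_Msqrt : Mis *m Ms = 1%:M.
Proof.
rewrite mulmx_diag -diag_const_mx; congr diag_mx; apply/rowP => i.
by rewrite !mxE mulVf // gt_eqF ?sqrtr_gt0.
Qed.

Lemma Msqrt_Minvsqrt : Ms *m Mis = 1%:M.
Proof. exact: mulmx1C Minvsqrt_Msqrt. Qed.

Lemma Mmx_Msqrt : Mmx m = Ms *m Ms.
Proof.
rewrite mulmx_diag; congr diag_mx; apply/rowP => i.
by rewrite !mxE -expr2 sqr_sqrtr ?ltW.
Qed.

Lemma char_poly_normLap :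
  char_poly normLap = char_poly (invmx (Mmx m) *m LapB src tgt B).
Proof.
have invM : invmx (Mmx m) = Mis *m Mis.
  apply: mulmx1_invmx.
  by rewrite Mmx_Msqrt mulmxA -(mulmxA Ms) Msqrt_Minvsqrt mulmx1 Msqrt_Minvsqrt.
have [Mis_unit _] := mulmx1_unit Minvsqrt_Msqrt.
rewrite -(char_poly_conj (invmx (Mmx m) *m _) Mis_unit).
rewrite (mulmx1_invmx Minvsqrt_Msqrt) invM !mulmxA Msqrt_Minvsqrt mul1mx.
by rewrite /normLap /LapB !mulmxA.
Qed.

Lemma normLap_sym : normLap^T = normLap.
Proof. by rewrite /normLap /LapB !trmx_mul trmxK !tr_diag_mx !mulmxA. Qed.

Lemma normLap_congruence : normLap = (A^T *m Mis)^T *m Gam B *m (A^T *m Mis).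
Proof. by rewrite trmx_mul trmxK tr_diag_mx /normLap /LapB !mulmxA. Qed.

Lemma normLap_psd : loewner_le 0 normLap.
Proof.
have -> : 0 = (A^T *m Mis)^T *m diag_mx (\row_e 0) *m (A^T *m Mis).
  rewrite (_ : \row_e 0 = 0) ?linear0 ?mulmx0 ?mul0mx //.
  by apply/rowP => e; rewrite !mxE.
rewrite normLap_congruence.
by apply/loewner_le_congruence/loewner_le_diag => e; rewrite ltW.
Qed.

Lemma redLap_congruence : redLap = phase_mx^T *m Gam B *m phase_mx.
Proof.
by rewrite /redLap normLap_congruence /phase_mx !trmx_mul !mulmxA.
Qed.

Lemma hessU_congruence th :
  hessU src tgt B m Y th =
  phase_mx^T *m diag_mx (\row_e (B e * cos (phase src tgt m Y th e 0))) *m phase_mx.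
Proof. by rewrite /hessU /phase_mx !trmx_mul trmxK tr_diag_mx !mulmxA. Qed.

Lemma redLap_sym : redLap^T = redLap.
Proof. by rewrite /redLap trmx_mul (trmx_mul Y^T) trmxK normLap_sym mulmxA. Qed.

Lemma normLap_kernel : normLap *m (Ms *m const_mx 1 : 'cV_n.+1) = 0.
Proof.
rewrite /normLap /LapB -!mulmxA (mulmxA Mis Ms) Minvsqrt_Msqrt mul1mx.
by rewrite incidence_trmx_const1 !mulmx0.
Qed.

Lemma char_poly_normLap_deflate : char_poly normLap = 'X * char_poly redLap.
Proof.
have [YY Y1] := Y_orthonormal.
pose v : 'cV_n.+1 := Ms *m const_mx 1.
have vv : (v^T *m v) 0 0 = \sum_i m i.
  rewrite mxE; apply: eq_bigr => i _.
  by rewrite /v mul_diag_mx !mxE mulr1 -expr2 sqr_sqrtr ?ltW.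
have m_sum_gt0 : 0 < \sum_i m i.
  by rewrite big_ord_recl ltr_pwDl ?sumr_ge0 // => i _; rewrite ltW.
pose c := Num.sqrt (\sum_i m i).
have c_gt0 : 0 < c by rewrite sqrtr_gt0.
apply: (@char_poly_deflate _ _ _ (c^-1 *: v)) normLap_sym _ _ YY _.
- by rewrite -scalemxAr normLap_kernel scaler0.
- apply/matrixP => i j; rewrite !ord1 !linearZ /= -scalemxAl scalerA mxE vv.
  rewrite mxE eqxx mulr1n -(sqr_sqrtr (ltW m_sum_gt0)) -/c -expr2 -exprMn.
  by rewrite mulVf ?gt_eqF ?expr1n.
- rewrite -scalemxAr (_ : Y^T *m v = 0) ?scaler0 //.
  apply: trmx_inj; rewrite /v trmx0 !trmx_mul trmxK trmx_const /Msqrt tr_diag_mx.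
  exact: Y1.
Qed.

Lemma hessU_ge_redLap rho th :
  0 <= rho -> Sset src tgt m Y rho th ->
  loewner_le (sin rho *: redLap) (hessU src tgt B m Y th).
Proof.
move=> rho_ge0 th_in; rewrite redLap_congruence hessU_congruence.
rewrite scalemxAl scalemxAr -linearZ /= (_ : _ *: _ = \row_e (sin rho * B e)).
  apply/loewner_le_congruence/loewner_le_diag => e.
  by rewrite mulrC ler_pM2l ?sin_le_cos.
by apply/rowP => e; rewrite !mxE.
Qed.

Lemma hessU_le_redLap (th : 'cV[R]_n) : loewner_le (hessU src tgt B m Y th) redLap.
Proof.
rewrite redLap_congruence hessU_congruence.
by apply/loewner_le_congruence/loewner_le_diag => e; rewrite ger_pMr ?cos_le1.
Qed.

Variable s : seq R.
Hypothesis s_spectrum : sorted_spectrum (invmx (Mmx m) *m LapB src tgt B) s.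

Lemma char_poly_normLap_spectrum : char_poly normLap = \prod_(r <- s) ('X - r%:P).
Proof. by rewrite char_poly_normLap (proj2 s_spectrum). Qed.

Lemma spectrum_head0 : s = 0 :: behead s.
Proof.
apply: sorted_min_mem (proj1 s_spectrum) _ _ => [r r_in|].
  apply: char_poly_root_ge0 normLap_psd _.
  by rewrite char_poly_normLap_spectrum root_prod_XsubC.
rewrite -root_prod_XsubC -char_poly_normLap_spectrum char_poly_normLap_deflate.
by rewrite rootM rootX eqxx.
Qed.

Lemma char_poly_redLap_spectrum :
  char_poly redLap = \prod_(r <- behead s) ('X - r%:P).
Proof.
apply: (@mulfI _ 'X); first by rewrite polyX_eq0.
rewrite -char_poly_normLap_deflate char_poly_normLap_spectrum {1}spectrum_head0.
by rewrite big_cons subr0.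
Qed.

Lemma redLap_ge_lambda2 : loewner_le (nth 0 s 1 *: 1%:M) redLap.
Proof.
apply: loewner_scalar_le redLap_sym char_poly_redLap_spectrum _.
have := proj1 s_spectrum; rewrite spectrum_head0 /= => /path_sorted t_sorted.
by rewrite nth0; exact: sorted_head_le.
Qed.

Lemma redLap_le_lambdaN : loewner_le redLap (last 0 s *: 1%:M).
Proof.
have normLap_le := loewner_le_scalar normLap_sym char_poly_normLap_spectrum
  (sorted_le_last 0 (proj1 s_spectrum)).
have := loewner_le_congruence Y normLap_le.
by rewrite -scalemxAr mulmx1 -scalemxAl (proj1 Y_orthonormal).
Qed.

End NetworkHessian.

Theorem lemmaD2 (R : realType) (N E : nat) (src tgt : 'I_E -> 'I_N)
  (B : 'I_E -> R) (m : 'I_N -> R) (Y : 'M[R]_(N, N.-1)) (s : seq R) :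
  (1 < N)%N ->
  simple_graph src tgt ->
  graph_connected src tgt ->
  (forall e, 0 < B e) ->
  (forall i, 0 < m i) ->
  Y_ok m Y ->
  sorted_spectrum (invmx (Mmx m) *m LapB src tgt B) s ->
  forall (rho : R), 0 < rho -> rho < pi / 2 ->
  forall th : 'cV[R]_(N.-1), Sset src tgt m Y rho th ->
    loewner_le ((sin rho * nth 0 s 1) *: 1%:M) (hessU src tgt B m Y th) /\
    loewner_le (hessU src tgt B m Y th) (last 0 s *: 1%:M).
Proof.
case: N src tgt m Y => [//|n] src tgt m Y _ _ _ B_gt0 m_gt0 Y_on s_spec.
move=> rho rho_gt0 rho_lt th th_in.
have sin_ge0 : 0 <= sin rho by rewrite ltW // sin_gt0_pihalf ?rho_gt0.
split.
- apply: loewner_le_trans (hessU_ge_redLap B_gt0 (ltW rho_gt0) th_in).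
  by rewrite -scalerA; apply/loewner_leZ/(redLap_ge_lambda2 B_gt0 m_gt0 Y_on s_spec).
- exact: loewner_le_trans (hessU_le_redLap _ _ _ _ B_gt0 th)
                           (redLap_le_lambdaN m_gt0 Y_on s_spec).
Qed.
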